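(* Let $\mathcal{G}_0$ be a real semisimple Lie algebra with Cartan decomposition $\mathcal{G}_0=\mathcal{T}_0+\mathcal{P}_0$, let $\mathcal{G}$ be its complexification and $\mathcal{G}_k=\mathcal{T}_0+i\mathcal{P}_0$ the associated compact real form of $\mathcal{G}$. Let $S$ be a finite abelian semigroup such that the expanded algebra $\mathcal{G}_{k,S}=S\otimes\mathcal{G}_k$ is compact (i.e. all eigenvalues $\xi_\alpha$ of the matrix $\mathbf{g}^S$ are positive). Then $\mathcal{G}_{0,S}=S\otimes\mathcal{G}_0=\mathcal{T}_{0,S}+\mathcal{P}_{0,S}$, with $\mathcal{T}_{0,S}=S\otimes\mathcal{T}_0=\mathrm{span}\{\lambda_\alpha\otimes X:X\in\mathcal{T}_0\}$ and $\mathcal{P}_{0,S}=S\otimes\mathcal{P}_0$, is a Cartan decomposition of the real Lie algebra $\mathcal{G}_{0,S}$.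
   Context: For a (real or complex) Lie algebra $\mathcal{L}$ with basis $\{X_i\}$, $[X_i,X_j]=C_{ij}^kX_k$, and a finite abelian semigroup $S=\{\lambda_\alpha\}$ with 2-selector $K_{\alpha\beta}^\gamma$ ($=1$ if $\lambda_\alpha\lambda_\beta=\lambda_\gamma$, else $0$), the $S$-expanded algebra $S\otimes\mathcal{L}$ has basis $\lambda_\alpha\otimes X_i$ (over the same field) and bracket $[\lambda_\alpha\otimes X_i,\lambda_\beta\otimes X_j]=K_{\alpha\beta}^\gamma C_{ij}^k\,\lambda_\gamma\otimes X_k$; $S\otimes\mathcal{G}$ is the complexification of $S\otimes\mathcal{G}_0$. The matrix $\mathbf{g}^S$ has entries $g^S_{\alpha\beta}=K_{\alpha\gamma}^\lambda K_{\beta\lambda}^\gamma$. A real semisimple Lie algebra is compact if its Killing form is negative definite. Cartan decomposition: if $\mathcal{L}_0$ is a real semisimple Lie algebra with complexification $\mathcal{L}$ and $\sigma$ the conjugation of $\mathcal{L}$ with respect to $\mathcal{L}_0$, a decomposition $\mathcal{L}_0=\mathcal{T}+\mathcal{P}$ with $\mathcal{T}$ a subalgebra is a Cartan decomposition if there exists a compact real form $\mathcal{L}_k$ of $\mathcal{L}$ with $\sigma(\mathcal{L}_k)\subset\mathcal{L}_k$, $\mathcal{T}=\mathcal{L}_0\cap\mathcal{L}_k$ and $\mathcal{P}=\mathcal{L}_0\cap(i\mathcal{L}_k)$. *)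

From HB Require Import structures.
From mathcomp Require Import all_boot all_order all_algebra.
From mathcomp Require Import complex.
From mathcomp Require Import reals.
Set Implicit Arguments. Unset Strict Implicit. Unset Printing Implicit Defensive.
Import Order.TTheory GRing.Theory Num.Theory.
Local Open Scope ring_scope.

(* Lie algebras given by structure constants w.r.t. a basis indexed by
   a finite type I: vectors are finite functions I -> K, and
   [X_i, X_j] = C_ij^k X_k.                                            *)

Definition sconst (K : Type) (I : finType) := I -> I -> I -> K.

Definition lie_br (K : comNzRingType) (I : finType) (c : sconst K I)
  (x y : {ffun I -> K}) : {ffun I -> K} :=
  [ffun k => \sum_(i : I) \sum_(j : I) x i * y j * c i j k].

Definition is_lie (K : comNzRingType) (I : finType) (c : sconst K I) : Prop :=
  (forall x, lie_br c x x = 0) /\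
  (forall x y z, lie_br c x (lie_br c y z) + lie_br c y (lie_br c z x)
                 + lie_br c z (lie_br c x y) = 0).

Definition scv (K : comNzRingType) (I : finType) (a : K) (x : {ffun I -> K})
  : {ffun I -> K} := [ffun i => a * x i].

Definition subspace (K : comNzRingType) (I : finType)
  (A : {ffun I -> K} -> Prop) : Prop :=
  A 0 /\ (forall x y, A x -> A y -> A (x + y)) /\
  (forall (a : K) x, A x -> A (scv a x)).

Definition subalgebra (K : comNzRingType) (I : finType) (c : sconst K I)
  (A : {ffun I -> K} -> Prop) : Prop :=
  subspace A /\ (forall x y, A x -> A y -> A (lie_br c x y)).

Definition is_ideal (K : comNzRingType) (I : finType) (c : sconst K I)
  (A : {ffun I -> K} -> Prop) : Prop :=
  subspace A /\ (forall x a, A a -> A (lie_br c x a)).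

Definition abelian_sub (K : comNzRingType) (I : finType) (c : sconst K I)
  (A : {ffun I -> K} -> Prop) : Prop :=
  forall a b, A a -> A b -> lie_br c a b = 0.

Definition semisimple (K : fieldType) (I : finType) (c : sconst K I) : Prop :=
  is_lie c /\
  (forall A, is_ideal c A -> abelian_sub c A -> forall a, A a -> a = 0).

(* Standard basis vectors and the Killing form B(x,y) = tr(ad x ad y). *)
Definition ebasis (K : comNzRingType) (I : finType) (k : I) : {ffun I -> K} :=
  [ffun j => (j == k)%:R].

Definition killing (K : comNzRingType) (I : finType) (c : sconst K I)
  (x y : {ffun I -> K}) : K :=
  \sum_(k : I) lie_br c x (lie_br c y (ebasis K k)) k.

Definition compact (R : realType) (I : finType) (c : sconst R I) : Prop :=
  semisimple c /\ (forall x, x != 0 -> killing c x x < 0).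

Definition selector (K : comNzRingType) (S : finType) (mul : S -> S -> S)
  (a b g : S) : K := (mul a b == g)%:R.

(* structure constants of S (x) L in the basis lambda_a (x) X_i *)
Definition expand (K : comNzRingType) (S : finType) (mul : S -> S -> S)
  (I : finType) (c : sconst K I) : sconst K (S * I)%type :=
  fun p q r => selector K mul p.1 q.1 r.1 * c p.2 q.2 r.2.

Definition tens (K : comNzRingType) (S I : finType) (a : S)
  (x : {ffun I -> K}) : {ffun (S * I)%type -> K} :=
  [ffun p => (p.1 == a)%:R * x p.2].

Definition span (K : comNzRingType) (J : finType) (A : {ffun J -> K} -> Prop)
  (v : {ffun J -> K}) : Prop :=
  exists (m : nat) (r : 'I_m -> K) (u : 'I_m -> {ffun J -> K}),
    (forall k, A (u k)) /\ v = \sum_(k < m) scv (r k) (u k).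

Definition expand_sub (K : comNzRingType) (S I : finType)
  (A : {ffun I -> K} -> Prop) : {ffun (S * I)%type -> K} -> Prop :=
  span (fun v => exists (a : S) (x : {ffun I -> K}), A x /\ v = tens a x).

(* The complexification of the real Lie algebra with
   constants c is the complex Lie algebra {ffun I -> R[i]} with the same
   (real) constants; the conjugation sigma w.r.t. the real form is the
   entrywise complex conjugation.                                       *)

Definition cst (R : rcfType) (I : finType) (c : sconst R I) : sconst R[i] I :=
  fun i j k => real_complex R (c i j k).

Definition cplx (R : rcfType) (I : finType) (x : {ffun I -> R})
  : {ffun I -> R[i]} := [ffun i => real_complex R (x i)].

Definition sigma (R : rcfType) (I : finType) (v : {ffun I -> R[i]})
  : {ffun I -> R[i]} := [ffun i => conjc (v i)].

Definition imag_unit (R : rcfType) : R[i] := Complex 0 1.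

(* Real subspaces of the complex algebra are given by a real basis
   b : J -> {ffun I -> R[i]}; rspan b is its real linear span.          *)
Definition rspan (R : rcfType) (J I : finType) (b : J -> {ffun I -> R[i]})
  (v : {ffun I -> R[i]}) : Prop :=
  exists r : J -> R, v = \sum_(p : J) scv (real_complex R (r p)) (b p).

Definition i_rspan (R : rcfType) (J I : finType) (b : J -> {ffun I -> R[i]})
  (v : {ffun I -> R[i]}) : Prop :=
  exists w, rspan b w /\ v = scv (imag_unit R) w.

(* L_k := rspan b is a real form of the complexification of c (i.e. a real
   subalgebra with L = L_k (+) i L_k, equivalently b is a complex basis),
   it is closed under the bracket with real structure constants d in the
   basis b, and the real Lie algebra L_k (~ constants d) is compact.     *)
Definition compact_real_form (R : realType) (I : finType) (c : sconst R I)
  (b : I -> {ffun I -> R[i]}) (d : sconst R I) : Prop :=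
  [/\ (forall z : I -> R[i], \sum_(p : I) scv (z p) (b p) = 0 -> forall p, z p = 0),
      (forall p q, lie_br (cst c) (b p) (b q)
                   = \sum_(r : I) scv (real_complex R (d p q r)) (b r))
    & compact d].

(* The compact real form L_k = rspan b witnesses that L0 = T + P is a
   Cartan decomposition: sigma(L_k) in L_k, T = L0 /\ L_k, P = L0 /\ iL_k. *)
Definition cartan_witness (R : realType) (I : finType) (c : sconst R I)
  (T P : {ffun I -> R} -> Prop) (b : I -> {ffun I -> R[i]}) (d : sconst R I)
  : Prop :=
  [/\ compact_real_form c b d,
      (forall v, rspan b v -> rspan b (sigma v)),
      (forall x, T x <-> rspan b (cplx x))
    & (forall x, P x <-> i_rspan b (cplx x))].

Definition is_cartan_decomposition (R : realType) (I : finType)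
  (c : sconst R I) (T P : {ffun I -> R} -> Prop) : Prop :=
  [/\ semisimple c, subalgebra c T, subspace P,
      (forall x, exists t p, [/\ T t, P p & x = t + p])
    & exists b d, cartan_witness c T P b d].

(* A vector of S (x) L is the family of its slices (v_a)_(a in S) in L, and
   [lambda_a (x) X, lambda_e (x) Y] = lambda_(ae) (x) [X, Y].  So S (x) T0 consists of the
   families with all slices in T0, and the subalgebra property, G0 = T0 + P0 and the
   properties of the compact form all hold slice by slice for the complex basis
   lambda_a (x) b_i, whose structure constants are those of S (x) Gk.  Semisimplicity of
   S (x) G0 comes from that of S (x) Gk: both have the same complexification, and the
   complexification of a real semisimple algebra has no nonzero abelian ideal. *)

From HB Require Import structures.
From mathcomp Require Import all_boot all_order all_algebra.
From mathcomp Require Import complex.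
From mathcomp Require Import reals.
From mathcomp Require Import ring.
From Stdlib Require Import IndefiniteDescription.
Set Implicit Arguments. Unset Strict Implicit. Unset Printing Implicit Defensive.
Import Order.TTheory GRing.Theory Num.Theory.
Local Open Scope ring_scope.

Lemma big_rot3 (V : nmodType) (A B C : finType) (F : A -> B -> C -> V) :
  \sum_a \sum_b \sum_c F a b c = \sum_c \sum_a \sum_b F a b c.
Proof. by under eq_bigr do rewrite exchange_big; rewrite exchange_big. Qed.

Lemma sum_natr_eql (K : pzSemiRingType) (J : finType) (k : J) (F : J -> K) :
  \sum_j ((j == k)%:R * F j) = F k.
Proof.
rewrite (bigD1 k) //= eqxx mul1r big1 ?addr0 // => j jk.
by rewrite (negbTE jk) mul0r.
Qed.

Lemma sum_natr_eqr (K : pzSemiRingType) (J : finType) (k : J) (F : J -> K) :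
  \sum_j ((k == j)%:R * F j) = F k.
Proof. by rewrite -(sum_natr_eql k); apply: eq_bigr => j _; rewrite eq_sym. Qed.

Section Bracket.
Variables (K : comNzRingType) (I : finType).
Implicit Types (x y z : {ffun I -> K}) (a : K).

Lemma scvA a a' x : scv a (scv a' x) = scv (a * a') x.
Proof. by apply/ffunP=> i; rewrite !ffunE mulrA. Qed.
Lemma scv1 x : scv 1 x = x.
Proof. by apply/ffunP=> i; rewrite !ffunE mul1r. Qed.
Lemma scvN1 x : scv (-1) x = - x.
Proof. by apply/ffunP=> i; rewrite !ffunE mulN1r. Qed.
Lemma scvDr a x y : scv a (x + y) = scv a x + scv a y.
Proof. by apply/ffunP=> i; rewrite !ffunE mulrDr. Qed.
Lemma scvDl a a' x : scv (a + a') x = scv a x + scv a' x.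
Proof. by apply/ffunP=> i; rewrite !ffunE mulrDl. Qed.
Lemma scv0l x : scv 0 x = 0.
Proof. by apply/ffunP=> i; rewrite !ffunE mul0r. Qed.
Lemma scv0r a : scv a (0 : {ffun I -> K}) = 0.
Proof. by apply/ffunP=> i; rewrite !ffunE mulr0. Qed.

Lemma scv_sumr (J : Type) (r : seq J) (F : J -> {ffun I -> K}) a :
  scv a (\sum_(p <- r) F p) = \sum_(p <- r) scv a (F p).
Proof. exact: (big_morph (scv a) (scvDr a) (scv0r a)). Qed.

Lemma scv_suml (J : Type) (r : seq J) (F : J -> K) x :
  scv (\sum_(p <- r) F p) x = \sum_(p <- r) scv (F p) x.
Proof. exact: (big_morph (fun a => scv a x) (fun a a' => scvDl a a' x) (scv0l x)). Qed.

Lemma ffun_ebasisE x : x = \sum_i scv (x i) (ebasis K i).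
Proof.
apply/ffunP=> k; rewrite sum_ffunE -(sum_natr_eqr k x).
by apply: eq_bigr => i _; rewrite !ffunE mulrC.
Qed.

Lemma subspace_sum (A : {ffun I -> K} -> Prop) (J : Type) (r : seq J) (P : pred J) F :
  subspace A -> (forall p, P p -> A (F p)) -> A (\sum_(p <- r | P p) F p).
Proof. by move=> [A0 [AD _]] AF; elim/big_rec: _ => // p s /AF; apply: AD. Qed.

Lemma subspaceN (A : {ffun I -> K} -> Prop) x : subspace A -> A x -> A (- x).
Proof. by move=> [_ [_ AZ]] Ax; rewrite -scvN1; apply: AZ. Qed.

Variable c : sconst K I.

Lemma lie_brDl x y z : lie_br c (x + y) z = lie_br c x z + lie_br c y z.
Proof.
apply/ffunP=> k; rewrite !ffunE -big_split /=; apply: eq_bigr => i _.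
by rewrite -big_split /=; apply: eq_bigr => j _; rewrite !ffunE; ring.
Qed.

Lemma lie_brDr x y z : lie_br c x (y + z) = lie_br c x y + lie_br c x z.
Proof.
apply/ffunP=> k; rewrite !ffunE -big_split /=; apply: eq_bigr => i _.
by rewrite -big_split /=; apply: eq_bigr => j _; rewrite !ffunE; ring.
Qed.

Lemma lie_brZl a x y : lie_br c (scv a x) y = scv a (lie_br c x y).
Proof.
apply/ffunP=> k; rewrite !ffunE mulr_sumr; apply: eq_bigr => i _.
by rewrite mulr_sumr; apply: eq_bigr => j _; rewrite !ffunE; ring.
Qed.

Lemma lie_brZr a x y : lie_br c x (scv a y) = scv a (lie_br c x y).
Proof.
apply/ffunP=> k; rewrite !ffunE mulr_sumr; apply: eq_bigr => i _.
by rewrite mulr_sumr; apply: eq_bigr => j _; rewrite !ffunE; ring.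
Qed.

Lemma lie_br0l y : lie_br c 0 y = 0.
Proof. by have := lie_brZl 0 0 y; rewrite !scv0l. Qed.

Lemma lie_br0r y : lie_br c y 0 = 0.
Proof. by have := lie_brZr 0 y 0; rewrite !scv0l. Qed.

Lemma lie_br_suml (J : Type) (r : seq J) (F : J -> {ffun I -> K}) y :
  lie_br c (\sum_(p <- r) F p) y = \sum_(p <- r) lie_br c (F p) y.
Proof.
exact: (big_morph (fun x => lie_br c x y) (fun x x' => lie_brDl x x' y) (lie_br0l y)).
Qed.

Lemma lie_br_sumr (J : Type) (r : seq J) (F : J -> {ffun I -> K}) y :
  lie_br c y (\sum_(p <- r) F p) = \sum_(p <- r) lie_br c y (F p).
Proof. exact: (big_morph (lie_br c y) (lie_brDr y) (lie_br0r y)). Qed.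

Lemma lie_br_lincomb (J1 J2 : finType) (a : J1 -> K) (u : J1 -> {ffun I -> K})
  (a' : J2 -> K) (v : J2 -> {ffun I -> K}) :
  lie_br c (\sum_p scv (a p) (u p)) (\sum_q scv (a' q) (v q)) =
  \sum_p \sum_q scv (a p * a' q) (lie_br c (u p) (v q)).
Proof.
rewrite lie_br_suml; apply: eq_bigr => p _; rewrite lie_br_sumr.
by apply: eq_bigr => q _; rewrite lie_brZl lie_brZr scvA.
Qed.

Lemma lie_br_ebasis i j : lie_br c (ebasis K i) (ebasis K j) = [ffun k => c i j k].
Proof.
apply/ffunP=> k; rewrite !ffunE -(sum_natr_eql i (fun i' => c i' j k)).
apply: eq_bigr => i' _; rewrite -(sum_natr_eql j (fun j' => c i' j' k)) mulr_sumr.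
by apply: eq_bigr => j' _; rewrite !ffunE; ring.
Qed.

Definition antisym := forall i j k, c i j k = - c j i k.

Lemma antisym_of_lie : is_lie c -> antisym.
Proof.
move=> [alt _] i j k; have := alt (ebasis K i + ebasis K j).
rewrite !lie_brDl !lie_brDr !alt add0r addr0 => /ffunP /(_ k).
by rewrite !lie_br_ebasis !ffunE => /eqP; rewrite addr_eq0 => /eqP.
Qed.

Lemma lie_brC x y : antisym -> lie_br c x y = - lie_br c y x.
Proof.
move=> ac; apply/ffunP=> k; rewrite !ffunE exchange_big -sumrN.
by apply: eq_bigr => i _; rewrite -sumrN; apply: eq_bigr => j _; rewrite ac; ring.
Qed.

Definition jacobiator x y z := lie_br c x (lie_br c y z) + lie_br c y (lie_br c z x)
  + lie_br c z (lie_br c x y).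

Lemma lie_br2_ebasisE x y z : lie_br c x (lie_br c y z) =
  \sum_i \sum_l \sum_m
    scv (x i * y l * z m) (lie_br c (ebasis K i) (lie_br c (ebasis K l) (ebasis K m))).
Proof.
rewrite {1}(ffun_ebasisE y) {1}(ffun_ebasisE z) lie_br_lincomb.
rewrite {1}(ffun_ebasisE x) lie_br_suml; apply: eq_bigr => i _.
rewrite lie_brZl lie_br_sumr scv_sumr; apply: eq_bigr => l _.
rewrite lie_br_sumr scv_sumr; apply: eq_bigr => m _.
by rewrite lie_brZr scvA mulrA.
Qed.

Lemma jacobiator_ebasisE x y z : jacobiator x y z =
  \sum_i \sum_l \sum_m
    scv (x i * y l * z m) (jacobiator (ebasis K i) (ebasis K l) (ebasis K m)).
Proof.
rewrite /jacobiator !lie_br2_ebasisE [X in _ + X + _]big_rot3.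
rewrite [X in _ + _ + X]big_rot3 [X in _ + _ + X]big_rot3.
rewrite -!big_split; apply: eq_bigr => i _; rewrite -!big_split; apply: eq_bigr => l _.
rewrite -!big_split; apply: eq_bigr => m _ /=; rewrite !scvDr.
have -> : y l * z m * x i = x i * y l * z m by ring.
by have -> : z m * x i * y l = x i * y l * z m by ring.
Qed.

End Bracket.

Lemma is_lie_of_ebasis (F : numDomainType) (I : finType) (c : sconst F I) :
  antisym c -> (forall i l m, jacobiator c (ebasis F i) (ebasis F l) (ebasis F m) = 0) ->
  is_lie c.
Proof.
move=> ac jac0; split=> [x|x y z]; last first.
  rewrite -[_ + _]/(jacobiator c x y z) jacobiator_ebasisE.
  rewrite big1 // => i _; rewrite big1 // => l _.
  by rewrite big1 // => m _; rewrite jac0 scv0r.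
apply/ffunP=> k; have /ffunP/(_ k) := lie_brC x x ac; rewrite [RHS]ffunE => e.
have : lie_br c x x k *+ 2 == 0 by rewrite mulr2n {1}e addNr.
by rewrite mulrn_eq0 [in RHS]ffunE => /eqP.
Qed.

Definition slice (K : comNzRingType) (S I : finType) (a : S)
  (v : {ffun (S * I)%type -> K}) : {ffun I -> K} := [ffun i => v (a, i)].

Section Expansion.
Variables (K : comNzRingType) (S : finType) (mul : S -> S -> S) (I : finType).
Implicit Types (a e g : S) (x y : {ffun I -> K}) (v w : {ffun (S * I)%type -> K}).

Lemma slice_tens a e x : slice a (tens e x) = scv (a == e)%:R x.
Proof. by apply/ffunP=> i; rewrite !ffunE. Qed.

Lemma sliceD a v w : slice a (v + w) = slice a v + slice a w.
Proof. by apply/ffunP=> i; rewrite !ffunE. Qed.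
Lemma slice0 a : slice a (0 : {ffun (S * I)%type -> K}) = 0.
Proof. by apply/ffunP=> i; rewrite !ffunE. Qed.
Lemma sliceZ a r v : slice a (scv r v) = scv r (slice a v).
Proof. by apply/ffunP=> i; rewrite !ffunE. Qed.
Lemma slice_sum a (J : Type) (r : seq J) (F : J -> {ffun (S * I)%type -> K}) :
  slice a (\sum_(p <- r) F p) = \sum_(p <- r) slice a (F p).
Proof. exact: (big_morph (slice a) (sliceD a) (slice0 a)). Qed.

Lemma slice_inj v w : (forall a, slice a v = slice a w) -> v = w.
Proof. by move=> vw; apply/ffunP=> [[a i]]; have /ffunP/(_ i) := vw a; rewrite !ffunE. Qed.

Lemma sum_tens_slice v : v = \sum_a tens a (slice a v).
Proof.
apply/ffunP=> [[g k]]; rewrite sum_ffunE -(sum_natr_eqr g (fun a => v (a, k))).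
by apply: eq_bigr => a _; rewrite !ffunE.
Qed.

Lemma slice_sum_tens a (z : (S * I)%type -> K) (u : I -> {ffun I -> K}) :
  slice a (\sum_p scv (z p) (tens p.1 (u p.2))) = \sum_i scv (z (a, i)) (u i).
Proof.
apply/ffunP=> k; rewrite !ffunE !sum_ffunE.
have sum_pair (G : (S * I)%type -> K) : \sum_p G p = \sum_e \sum_i G (e, i).
  by rewrite pair_bigA; apply: eq_bigr => [[]].
rewrite sum_pair -(sum_natr_eqr a (fun e => \sum_i scv (z (e, i)) (u i) k)).
apply: eq_bigr => e _; rewrite mulr_sumr; apply: eq_bigr => i _.
by rewrite !ffunE /=; ring.
Qed.

Lemma tensD a x y : tens a (x + y) = tens a x + tens a y.
Proof. by apply/ffunP=> p; rewrite !ffunE mulrDr. Qed.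
Lemma tens0 a : tens a (0 : {ffun I -> K}) = 0 :> {ffun (S * I)%type -> K}.
Proof. by apply/ffunP=> p; rewrite !ffunE mulr0. Qed.

Lemma ebasis_pair a (i : I) : ebasis K (a, i) = tens a (ebasis K i).
Proof. by apply/ffunP=> [[g k]]; rewrite !ffunE xpair_eqE -mulnb natrM. Qed.

Lemma tens_ebasisE a x : tens a x = \sum_i scv (x i) (ebasis K (a, i)).
Proof.
apply/ffunP=> [[g k]]; rewrite sum_ffunE !ffunE /=.
rewrite -(sum_natr_eqr k (fun i => (g == a)%:R * x i)); apply: eq_bigr => i _.
by rewrite ebasis_pair !ffunE; ring.
Qed.

Variable c : sconst K I.

Lemma lie_br_tens a e x y :
  lie_br (expand mul c) (tens a x) (tens e y) = tens (mul a e) (lie_br c x y).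
Proof.
rewrite [tens a x]tens_ebasisE [tens e y]tens_ebasisE lie_br_lincomb.
apply/ffunP=> [[g k]]; rewrite sum_ffunE !ffunE /= mulr_sumr; apply: eq_bigr => i _.
rewrite sum_ffunE mulr_sumr; apply: eq_bigr => j _.
by rewrite lie_br_ebasis !ffunE /expand /selector /= eq_sym; ring.
Qed.

Lemma slice_lie_br g v w : slice g (lie_br (expand mul c) v w) =
  \sum_a \sum_e scv (selector K mul a e g) (lie_br c (slice a v) (slice e w)).
Proof.
rewrite {1}(sum_tens_slice v) {1}(sum_tens_slice w) lie_br_suml slice_sum.
apply: eq_bigr => a _; rewrite lie_br_sumr slice_sum; apply: eq_bigr => e _.
by rewrite lie_br_tens slice_tens /selector eq_sym.
Qed.

Lemma expand_subP (A : {ffun I -> K} -> Prop) v : subspace A ->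
  expand_sub A v <-> forall a, A (slice a v).
Proof.
move=> sA; split.
  move=> [m [r [u [Au ->]]] a]; rewrite slice_sum; apply: subspace_sum => // k _.
  have [_ [_ AZ]] := sA; have [e [x [Ax ->]]] := Au k.
  by rewrite sliceZ slice_tens; apply/AZ/AZ.
move=> Av; exists #|S|, (fun _ => 1), (fun k => tens (enum_val k) (slice (enum_val k) v)).
split=> [k|]; first by exists (enum_val k), (slice (enum_val k) v).
rewrite {1}(sum_tens_slice v) (big_enum_val (fun a => tens a (slice a v))).
by apply: eq_bigr => k _; rewrite scv1.
Qed.

Lemma expand_subspace (A : {ffun I -> K} -> Prop) :
  subspace A -> subspace (@expand_sub K S I A).
Proof.
move=> sA; have [A0 [AD AZ]] := sA.
split; [|split] => [|v w|r v]; rewrite !expand_subP //.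
- by move=> a; rewrite slice0.
- by move=> Av Aw a; rewrite sliceD; apply: AD.
- by move=> Av a; rewrite sliceZ; apply: AZ.
Qed.

Lemma expand_subalgebra (A : {ffun I -> K} -> Prop) :
  subalgebra c A -> subalgebra (expand mul c) (@expand_sub K S I A).
Proof.
move=> [sA Abr]; split=> [|v w]; first exact: expand_subspace.
rewrite !expand_subP // => Av Aw g; rewrite slice_lie_br.
apply: subspace_sum => // a _; apply: subspace_sum => // e _.
by have [_ [_ AZ]] := sA; apply/AZ/Abr.
Qed.

Lemma expand_sub_decomposition (A B : {ffun I -> K} -> Prop) :
  subspace A -> subspace B -> (forall x, exists y z, [/\ A y, B z & x = y + z]) ->
  forall v, exists w w', [/\ expand_sub A w, expand_sub B w' & v = w + w'].
Proof.
move=> sA sB dec v.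
have /functional_choice[f fP] : forall a, exists yz : {ffun I -> K} * {ffun I -> K},
    [/\ A yz.1, B yz.2 & slice a v = yz.1 + yz.2].
  by move=> a; have [y [z yzP]] := dec (slice a v); exists (y, z).
pose glue (h : S -> {ffun I -> K}) : {ffun (S * I)%type -> K} := [ffun p => h p.1 p.2].
have sliceK h a : slice a (glue h) = h a by apply/ffunP=> i; rewrite !ffunE.
exists (glue (fun a => (f a).1)), (glue (fun a => (f a).2)).
split; [apply/expand_subP => // a|apply/expand_subP => // a|];
  rewrite ?sliceK; try by case: (fP a).
by apply: slice_inj => a; rewrite sliceD !sliceK; case: (fP a).
Qed.

End Expansion.

Lemma is_lie_expand (F : numDomainType) (S : finType) (mul : S -> S -> S) (I : finType)
  (c : sconst F I) : associative mul -> commutative mul ->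
  is_lie c -> is_lie (expand mul c).
Proof.
move=> mulA mulC lie_c; apply: is_lie_of_ebasis.
  by move=> p q r; rewrite /expand /selector mulC (antisym_of_lie lie_c) mulrN.
move=> [a i] [e l] [g m]; rewrite /jacobiator !ebasis_pair !lie_br_tens.
rewrite [mul e (mul g a)]mulA [mul (mul e g) a]mulC.
rewrite [mul g (mul a e)]mulC -mulA -!tensD.
by rewrite (proj2 lie_c) tens0.
Qed.

Section Complexification.
Variables (R : rcfType) (I : finType).
Local Notation iu := (imag_unit R).
Local Notation rc := (real_complex R).
Implicit Types (x y : {ffun I -> R}) (v w : {ffun I -> R[i]}).

Lemma imag_unit_sqr : iu * iu = -1.
Proof. by rewrite /imag_unit -expr2 sqr_i. Qed.

Lemma cplxD x y : cplx (x + y) = cplx x + cplx y.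
Proof. by apply/ffunP=> i; rewrite !ffunE rmorphD. Qed.
Lemma cplx0 : cplx (0 : {ffun I -> R}) = 0.
Proof. by apply/ffunP=> i; rewrite !ffunE rmorph0. Qed.
Lemma cplxZ r x : cplx (scv r x) = scv (rc r) (cplx x).
Proof. by apply/ffunP=> i; rewrite !ffunE rmorphM. Qed.
Lemma cplx_inj : injective (@cplx R I).
Proof.
by move=> x y /ffunP xy; apply/ffunP=> i; have := xy i; rewrite !ffunE => /complexI.
Qed.
Lemma cplx_eq0 x : cplx x = 0 -> x = 0.
Proof. by rewrite -cplx0 => /cplx_inj. Qed.

Lemma sigmaD v w : sigma (v + w) = sigma v + sigma w.
Proof. by apply/ffunP=> i; rewrite !ffunE rmorphD. Qed.
Lemma sigma0 : sigma (0 : {ffun I -> R[i]}) = 0.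
Proof. by apply/ffunP=> i; rewrite !ffunE rmorph0. Qed.
Lemma sigmaZ a v : sigma (scv a v) = scv (conjc a) (sigma v).
Proof. by apply/ffunP=> i; rewrite !ffunE rmorphM. Qed.
Lemma sigmaK : involutive (@sigma R I).
Proof. by move=> v; apply/ffunP=> i; rewrite !ffunE conjcK. Qed.

Variable c : sconst R I.

Lemma cplx_lie_br x y : lie_br (cst c) (cplx x) (cplx y) = cplx (lie_br c x y).
Proof.
apply/ffunP=> k; rewrite !ffunE rmorph_sum; apply: eq_bigr => i _.
by rewrite rmorph_sum; apply: eq_bigr => j _; rewrite !ffunE !rmorphM.
Qed.

Lemma sigma_lie_br v w : sigma (lie_br (cst c) v w) = lie_br (cst c) (sigma v) (sigma w).
Proof.
apply/ffunP=> k; rewrite !ffunE rmorph_sum; apply: eq_bigr => i _.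
by rewrite rmorph_sum; apply: eq_bigr => j _; rewrite !ffunE !rmorphM /cst;
  congr (_ * _ * _); exact: conjc_real.
Qed.

Definition re_part v : {ffun I -> R} := [ffun i => complex.Re (v i)].
Definition im_part v : {ffun I -> R} := [ffun i => complex.Im (v i)].

Lemma re_im_partE v : v = cplx (re_part v) + scv iu (cplx (im_part v)).
Proof. by apply/ffunP=> i; rewrite !ffunE; case: (v i) => r s; simpc. Qed.

Lemma cplx_re_part v : cplx (re_part v) = scv 2%:R^-1 (v + sigma v).
Proof. by apply/ffunP=> i; rewrite !ffunE ReJ_add mulrC. Qed.

Lemma cplx_im_part v : cplx (im_part v) = scv (2%:R^-1 * iu) (sigma v + scv (-1) v).
Proof. by apply/ffunP=> i; rewrite !ffunE ImJ_sub /imag_unit mulN1r; ring. Qed.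

Lemma scv_re_im a x y :
  scv a (cplx x + scv iu (cplx y)) =
  cplx (scv (complex.Re a) x - scv (complex.Im a) y) +
  scv iu (cplx (scv (complex.Im a) x + scv (complex.Re a) y)).
Proof.
apply/ffunP=> k; rewrite !ffunE; case: a => r s /=; rewrite /imag_unit; simpc.
by congr Complex; ring.
Qed.

Lemma lie_br_re_im x y x' y' :
  lie_br (cst c) (cplx x + scv iu (cplx y)) (cplx x' + scv iu (cplx y')) =
  cplx (lie_br c x x' - lie_br c y y') + scv iu (cplx (lie_br c x y' + lie_br c y x')).
Proof.
rewrite !lie_brDl !lie_brDr !lie_brZl !lie_brZr !cplx_lie_br !scvA imag_unit_sqr scvN1.
by apply/ffunP=> k; rewrite !ffunE; ring.
Qed.

End Complexification.

Section Ideals.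
Variables (K : comNzRingType) (I : finType) (c : sconst K I).
Implicit Types A B : {ffun I -> K} -> Prop.

Lemma is_idealI A B : is_ideal c A -> is_ideal c B -> is_ideal c (fun v => A v /\ B v).
Proof.
move=> [[A0 [AD AZ]] Ai] [[B0 [BD BZ]] Bi].
by split; [split; [|split]|] => // *; split; firstorder.
Qed.

Lemma is_idealD A B : is_ideal c A -> is_ideal c B ->
  is_ideal c (fun v => exists x y, [/\ A x, B y & v = x + y]).
Proof.
move=> [[A0 [AD AZ]] Ai] [[B0 [BD BZ]] Bi]; split; [split; [|split]|].
- by exists 0, 0; rewrite addr0.
- move=> _ _ [x [y [Ax By ->]]] [x' [y' [Ax' By' ->]]].
  by exists (x + x'), (y + y'); rewrite addrACA; split; [apply: AD|apply: BD|].
- move=> a _ [x [y [Ax By ->]]]; exists (scv a x), (scv a y).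
  by rewrite scvDr; split; [apply: AZ|apply: BZ|].
- move=> z _ [x [y [Ax By ->]]]; exists (lie_br c z x), (lie_br c z y).
  by rewrite lie_brDr; split; [apply: Ai|apply: Bi|].
Qed.

End Ideals.

Section ComplexSemisimple.
Variables (R : rcfType) (I : finType) (c : sconst R I).
Hypothesis semisimple_c : semisimple c.
Implicit Types (A : {ffun I -> R[i]} -> Prop) (v w : {ffun I -> R[i]}).

Lemma real_points_ideal A : is_ideal (cst c) A -> is_ideal c (fun x => A (cplx x)).
Proof.
move=> [[A0 [AD AZ]] Ai]; split; [split; [|split]|] => [|x y|r x|x y].
- by rewrite cplx0.
- by rewrite cplxD; apply: AD.
- by rewrite cplxZ; apply: AZ.
- by rewrite -cplx_lie_br; apply: Ai.
Qed.

Lemma real_points_abelian A : abelian_sub (cst c) A -> abelian_sub c (fun x => A (cplx x)).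
Proof. by move=> Aab x y Ax Ay; apply: cplx_eq0; rewrite -cplx_lie_br; apply: Aab. Qed.

(* The real and imaginary parts of a vector of a sigma-stable ideal are real points of it. *)
Lemma conj_stable_abelian_ideal_eq0 A : is_ideal (cst c) A -> abelian_sub (cst c) A ->
  (forall v, A v -> A (sigma v)) -> forall v, A v -> v = 0.
Proof.
move=> Aid Aab Aconj v Av; have [[_ [AD AZ]] _] := Aid.
have real_eq0 := semisimple_c.2 _ (real_points_ideal Aid) (real_points_abelian Aab).
have re0 : re_part v = 0 by apply: real_eq0; rewrite cplx_re_part; apply/AZ/AD/Aconj.
have im0 : im_part v = 0 by apply: real_eq0; rewrite cplx_im_part; apply/AZ/AD/AZ/Av/Aconj.
by rewrite (re_im_partE v) re0 im0 cplx0 scv0r addr0.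
Qed.

(* For an abelian ideal A, the ideal A + sigma A is abelian because
   [A, sigma A] lies in the sigma-stable abelian ideal A /\ sigma A, hence vanishes. *)
Lemma cst_abelian_ideal_eq0 A : is_ideal (cst c) A -> abelian_sub (cst c) A ->
  forall v, A v -> v = 0.
Proof.
move=> Aid Aab v Av; have [[A0 [AD AZ]] Ai] := Aid.
have antisym_cst : antisym (cst c).
  by move=> i j k; rewrite /cst (antisym_of_lie semisimple_c.1) rmorphN.
pose sA w := A (sigma w).
have sAid : is_ideal (cst c) sA.
  split; [split; [|split]|] => [|x y|a x|x y]; rewrite /sA.
  - by rewrite sigma0.
  - by rewrite sigmaD; apply: AD.
  - by rewrite sigmaZ; apply: AZ.
  - by rewrite sigma_lie_br; apply: Ai.
have sAab : abelian_sub (cst c) sA.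
  by move=> x y sx sy; rewrite -[LHS]sigmaK sigma_lie_br (Aab _ _ sx sy) sigma0.
have cross0 x y : A x -> sA y -> lie_br (cst c) x y = 0.
  move=> Ax sy; apply: (conj_stable_abelian_ideal_eq0 (is_idealI Aid sAid)).
  - by move=> w w' [Aw _] [Aw' _]; apply: Aab.
  - by move=> w [Aw sw]; split; rewrite /sA ?sigmaK.
  split; first by rewrite (lie_brC _ _ antisym_cst); apply/(subspaceN Aid.1)/Ai.
  exact: sAid.2.
apply: (conj_stable_abelian_ideal_eq0 (is_idealD Aid sAid)).
- move=> _ _ [x [y [Ax sy ->]]] [x' [y' [Ax' sy' ->]]].
  rewrite !lie_brDl !lie_brDr (Aab _ _ Ax Ax') (sAab _ _ sy sy') (cross0 _ _ Ax sy').
  by rewrite (lie_brC _ _ antisym_cst) (cross0 _ _ Ax' sy) oppr0 !addr0.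
- move=> _ [x [y [Ax sy ->]]]; exists (sigma y), (sigma x).
  by rewrite sigmaD addrC /sA !sigmaK.
- by exists v, 0; rewrite /sA sigma0 addr0.
Qed.

End ComplexSemisimple.

Section LinearCombination.
Variables (F : fieldType) (J I : finType) (B : J -> {ffun I -> F}).

Definition lincomb (z : {ffun J -> F}) : {ffun I -> F} := \sum_p scv (z p) (B p).

Definition lin_indep := forall z : J -> F, \sum_p scv (z p) (B p) = 0 -> forall p, z p = 0.

Lemma lincombD z w : lincomb (z + w) = lincomb z + lincomb w.
Proof. by rewrite /lincomb -big_split; apply: eq_bigr => p _; rewrite ffunE scvDl. Qed.
Lemma lincomb0 : lincomb 0 = 0.
Proof. by rewrite /lincomb big1 // => p _; rewrite ffunE scv0l. Qed.
Lemma lincombZ a z : lincomb (scv a z) = scv a (lincomb z).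
Proof. by rewrite /lincomb scv_sumr; apply: eq_bigr => p _; rewrite ffunE scvA. Qed.

Lemma lincomb_inj : lin_indep -> injective lincomb.
Proof.
move=> indep z w zw; apply/ffunP=> p; apply/eqP; rewrite -subr_eq0; apply/eqP.
apply: (indep (fun p => z p - w p)); rewrite -[RHS](subrr (lincomb w)) -{1}zw /lincomb -sumrB.
by apply: eq_bigr => q _; apply/ffunP=> k; rewrite !ffunE mulrBl.
Qed.

Lemma lincomb_lie_br (c : sconst F I) (d : sconst F J) :
  (forall p q, lie_br c (B p) (B q) = \sum_r scv (d p q r) (B r)) ->
  forall z w, lincomb (lie_br d z w) = lie_br c (lincomb z) (lincomb w).
Proof.
move=> Bbr z w; rewrite /lincomb lie_br_lincomb.
transitivity (\sum_r \sum_p \sum_q scv (z p * w q * d p q r) (B r)).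
  by apply: eq_bigr => r _; rewrite ffunE !scv_suml; under eq_bigr do rewrite scv_suml.
rewrite big_rot3 big_rot3; apply: eq_bigr => p _; apply: eq_bigr => q _.
by rewrite Bbr scv_sumr; apply: eq_bigr => r _; rewrite scvA.
Qed.

Lemma preim_lincomb_ideal (c : sconst F I) (d : sconst F J) (A : {ffun I -> F} -> Prop) :
  (forall z w, lincomb (lie_br d z w) = lie_br c (lincomb z) (lincomb w)) ->
  is_ideal c A -> is_ideal d (fun z => A (lincomb z)).
Proof.
move=> hom [[A0 [AD AZ]] Ai]; split; [split; [|split]|] => [|z w|a z|z w].
- by rewrite lincomb0.
- by rewrite lincombD; apply: AD.
- by rewrite lincombZ; apply: AZ.
- by rewrite hom; apply: Ai.
Qed.

End LinearCombination.

(* The coordinate matrix of a free family of #|I| vectors has trivial kernel. *)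
Lemma lincomb_surj (F : fieldType) (I : finType) (B : I -> {ffun I -> F}) :
  lin_indep B -> forall v, exists z, lincomb B z = v.
Proof.
move=> indep v; pose M : 'M[F]_#|I| := \matrix_(i, j) B (enum_val i) (enum_val j).
have lincombM (w : 'rV[F]_#|I|) k :
    lincomb B [ffun p => w 0 (enum_rank p)] k = (w *m M) 0 (enum_rank k).
  have sum_enum (G : I -> F) : \sum_p G p = \sum_(i < #|I|) G (enum_val i).
    by rewrite (big_enum_val G).
  rewrite sum_ffunE sum_enum !mxE; apply: eq_bigr => i _.
  by rewrite !ffunE !mxE enum_valK enum_rankK.
have unitM : M \in unitmx.
  rewrite -row_free_unit -kermx_eq0; apply/eqP/row_matrixP => i; rewrite row0.
  apply/rowP=> j; rewrite mxE.
  have /indep/(_ (enum_val j)) : lincomb B [ffun p => row i (kermx M) 0 (enum_rank p)] = 0.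
    by apply/ffunP=> k; rewrite lincombM -row_mul mulmx_ker row0 !mxE ffunE.
  by rewrite ffunE enum_valK !mxE.
exists [ffun p => (\row_j v (enum_val j) *m invmx M) 0 (enum_rank p)].
by apply/ffunP=> k; rewrite lincombM mulmxKV // mxE enum_rankK.
Qed.

Section RealStructureConstants.
Variables (R : rcfType) (I : finType).
Local Notation iu := (imag_unit R).

Definition cplx_sub (A : {ffun I -> R} -> Prop) (v : {ffun I -> R[i]}) :=
  exists x y, [/\ A x, A y & v = cplx x + scv iu (cplx y)].

Lemma cplx_sub_ideal (c : sconst R I) A : is_ideal c A -> is_ideal (cst c) (cplx_sub A).
Proof.
move=> [[A0 [AD AZ]] Ai]; have AN := subspaceN (conj A0 (conj AD AZ)).
split; [split; [|split]|].
- by exists 0, 0; rewrite cplx0 scv0r addr0.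
- move=> _ _ [x [y [Ax Ay ->]]] [x' [y' [Ax' Ay' ->]]].
  by exists (x + x'), (y + y'); rewrite !cplxD scvDr addrACA; split; [apply: AD|apply: AD|].
- move=> a _ [x [y [Ax Ay ->]]]; rewrite scv_re_im.
  by eexists _, _; split; last reflexivity; apply: AD; try apply: AN; apply: AZ.
- move=> w _ [x [y [Ax Ay ->]]]; rewrite (re_im_partE w) lie_br_re_im.
  by eexists _, _; split; last reflexivity; apply: AD; try apply: AN; apply: Ai.
Qed.

Lemma cplx_sub_abelian (c : sconst R I) A :
  abelian_sub c A -> abelian_sub (cst c) (cplx_sub A).
Proof.
move=> Aab _ _ [x [y [Ax Ay ->]]] [x' [y' [Ax' Ay' ->]]].
by rewrite lie_br_re_im !Aab // subrr addr0 cplx0 scv0r addr0.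
Qed.

(* An abelian ideal of c complexifies, then pulls back along B to an abelian ideal of
   the complexification of d. *)
Lemma semisimple_cplx_basis (c d : sconst R I) (B : I -> {ffun I -> R[i]}) :
  lin_indep B ->
  (forall p q, lie_br (cst c) (B p) (B q) = \sum_r scv (real_complex R (d p q r)) (B r)) ->
  is_lie c -> semisimple d -> semisimple c.
Proof.
move=> indep Bbr lie_c ss_d; split=> // A Aid Aab a Aa.
have hom := lincomb_lie_br (d := cst d) Bbr.
have [z za] := lincomb_surj indep (cplx a).
have JAid := preim_lincomb_ideal hom (cplx_sub_ideal Aid).
have JAab : abelian_sub (cst d) (fun z => cplx_sub A (lincomb B z)).
  move=> w w' Aw Aw'; apply: (lincomb_inj indep).
  by rewrite hom lincomb0; apply: (cplx_sub_abelian Aab Aw Aw').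
have Jz : cplx_sub A (lincomb B z).
  by rewrite za; exists a, 0; rewrite cplx0 scv0r addr0; split=> //; case: Aid => [[]].
by apply: cplx_eq0; rewrite -za (cst_abelian_ideal_eq0 ss_d JAid JAab Jz) lincomb0.
Qed.

End RealStructureConstants.

Lemma eq_lie_br (K : comNzRingType) (I : finType) (c c' : sconst K I) x y :
  (forall i j k, c i j k = c' i j k) -> lie_br c x y = lie_br c' x y.
Proof.
by move=> cc'; apply/ffunP=> k; rewrite !ffunE; apply: eq_bigr => i _;
  apply: eq_bigr => j _; rewrite cc'.
Qed.

Lemma i_rspan_scvP (R : rcfType) (J I : finType) (B : J -> {ffun I -> R[i]}) v :
  i_rspan B v <-> rspan B (scv (- imag_unit R) v).
Proof.
have iuK : - imag_unit R * imag_unit R = 1 by rewrite mulNr imag_unit_sqr opprK.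
split=> [[w [Bw ->]]|Bv]; first by rewrite scvA iuK scv1.
by exists (scv (- imag_unit R) v); rewrite scvA mulrC iuK scv1.
Qed.

Section ExpandedBasis.
Variables (R : rcfType) (S : finType) (mul : S -> S -> S) (I : finType).
Variable b : I -> {ffun I -> R[i]}.

Definition expand_basis (p : S * I) : {ffun (S * I)%type -> R[i]} := tens p.1 (b p.2).

Lemma lin_indep_expand_basis : lin_indep b -> lin_indep expand_basis.
Proof.
move=> indep z z0 [a i]; apply: (indep (fun i => z (a, i))).
by rewrite -slice_sum_tens z0 slice0.
Qed.

Lemma lie_br_expand_basis (c d : sconst R I) :
  (forall p q, lie_br (cst c) (b p) (b q) = \sum_r scv (real_complex R (d p q r)) (b r)) ->
  forall p q, lie_br (cst (expand mul c)) (expand_basis p) (expand_basis q) =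
    \sum_r scv (real_complex R (expand mul d p q r)) (expand_basis r).
Proof.
move=> bbr [a i] [e l]; rewrite (@eq_lie_br _ _ _ (expand mul (cst c))); last first.
  by move=> p q r; rewrite /cst /expand /selector rmorphM rmorph_nat.
rewrite lie_br_tens bbr; apply: slice_inj => g.
rewrite slice_tens slice_sum_tens scv_sumr; apply: eq_bigr => r _.
by rewrite scvA /expand /selector /= rmorphM rmorph_nat eq_sym.
Qed.

Lemma rspan_expand_basisP v : rspan expand_basis v <-> forall a, rspan b (slice a v).
Proof.
split=> [[r ->] a|]; first by exists (fun i => r (a, i)); apply: slice_sum_tens.
move=> /functional_choice[f fP]; exists (fun p => f p.1 p.2).
by apply: slice_inj => a; rewrite slice_sum_tens; apply: fP.
Qed.

Lemma slice_cplx a (x : {ffun (S * I)%type -> R}) : slice a (cplx x) = cplx (slice a x).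
Proof. by apply/ffunP=> i; rewrite !ffunE. Qed.

Lemma slice_sigma a (v : {ffun (S * I)%type -> R[i]}) : slice a (sigma v) = sigma (slice a v).
Proof. by apply/ffunP=> i; rewrite !ffunE. Qed.

End ExpandedBasis.

Section ExpandedCartan.
Variables (R : realType) (S : finType) (mul : S -> S -> S) (I : finType).
Variables (c d : sconst R I) (b : I -> {ffun I -> R[i]}).

Lemma expand_compact_real_form : compact_real_form c b d -> compact (expand mul d) ->
  compact_real_form (expand mul c) (expand_basis (S := S) b) (expand mul d).
Proof.
move=> [indep bbr _] compact_d; split => //; first exact: lin_indep_expand_basis.
exact: lie_br_expand_basis.
Qed.

Lemma expand_cartan_witness (T P : {ffun I -> R} -> Prop) :
  subspace T -> subspace P -> cartan_witness c T P b d -> compact (expand mul d) ->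
  cartan_witness (expand mul c) (expand_sub T) (expand_sub P)
    (expand_basis (S := S) b) (expand mul d).
Proof.
move=> sT sP [crf bconj Tb Pb] compact_d; split.
- exact: expand_compact_real_form.
- move=> v /rspan_expand_basisP bv; apply/rspan_expand_basisP => a.
  by rewrite slice_sigma; apply: bconj.
- move=> x; rewrite (expand_subP _ sT) rspan_expand_basisP.
  by split=> xT a; [rewrite slice_cplx; apply/Tb | apply/Tb; rewrite -slice_cplx].
- move=> x; rewrite (expand_subP _ sP) i_rspan_scvP rspan_expand_basisP.
  split=> xP a.
    by rewrite sliceZ slice_cplx -i_rspan_scvP; apply/Pb.
  by apply/Pb; rewrite i_rspan_scvP -slice_cplx -sliceZ.
Qed.

End ExpandedCartan.

Theorem theorem5 (R : realType) (I : finType) (c : sconst R I)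
  (T0 P0 : {ffun I -> R} -> Prop)
  (b : I -> {ffun I -> R[i]}) (d : sconst R I)
  (S : finType) (mul : S -> S -> S)
  (mul_assoc : associative mul) (mul_comm : commutative mul) :
  is_cartan_decomposition c T0 P0 ->
  cartan_witness c T0 P0 b d ->
  compact (expand mul d) ->
  is_cartan_decomposition (expand mul c)
    (@expand_sub R S I T0) (@expand_sub R S I P0).
Proof.
move=> [ss_c subalg_T sP dec _] wit compact_d; have sT := subalg_T.1.
have [[indep bbr _] _ _ _] := wit.
split.
- apply: (semisimple_cplx_basis (lin_indep_expand_basis (S := S) indep)).
  + exact: lie_br_expand_basis bbr.
  + exact: is_lie_expand mul_assoc mul_comm ss_c.1.
  + exact: compact_d.1.
- exact: expand_subalgebra.
- exact: expand_subspace.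
- exact: expand_sub_decomposition.
- by exists (expand_basis (S := S) b), (expand mul d); apply: expand_cartan_witness.
Qed.
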